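(* For $n\ge2$ and all $P,Q\in\Gamma_n$, $T(P\|Q)\le \frac1{16}\Psi(P\|Q)$.
   Context: $\Gamma_n=\{P=(p_1,\dots,p_n): p_i>0,\ \sum p_i=1\}$. $T(P\|Q)=\sum_{i=1}^n\frac{p_i+q_i}{2}\ln\frac{p_i+q_i}{2\sqrt{p_iq_i}}$ (natural logarithm); $\Psi(P\|Q)=\sum_{i=1}^n\frac{(p_i-q_i)^2(p_i+q_i)}{p_iq_i}$. *)

From Stdlib Require Import Reals.
Open Scope R_scope.

(* A probability vector of length n is a function p : nat -> R, whose
   entries p 0, ..., p (n-1) are used. *)
Definition Gamma (n : nat) (p : nat -> R) : Prop :=
  (forall i, (i < n)%nat -> 0 < p i) /\ sum_f_R0 p (n - 1) = 1.

(* sum over i = 0 .. n-1 (n >= 1 assumed where used) *)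
Definition sumn (n : nat) (f : nat -> R) : R := sum_f_R0 f (n - 1).

Definition T_div (n : nat) (p q : nat -> R) : R :=
  sumn n (fun i => (p i + q i) / 2 * ln ((p i + q i) / (2 * sqrt (p i * q i)))).

Definition Psi_div (n : nat) (p q : nat -> R) : R :=
  sumn n (fun i => (p i - q i) ^ 2 * (p i + q i) / (p i * q i)).

From Stdlib Require Import Reals Lra Lia.
Open Scope R_scope.

(* The inequality holds term by term, for any positive a = p_i and b = q_i.  With
   x = ((a + b)/2) / sqrt(a b) >= 1 the ratio of the arithmetic to the
   geometric mean, the T-term is ((a + b)/2) ln x, while the Psi-term divided
   by 16 is ((a + b)/2) (x^2 - 1)/2; so it suffices that
   ln x <= x - 1 <= (x^2 - 1)/2. *)

Lemma ln_le_sub1 (x : R) : 0 < x -> ln x <= x - 1.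
Proof.
  intros Hx.
  destruct (Rle_or_lt (ln x) (x - 1)) as [Hle | Hlt]; [exact Hle |].
  apply exp_increasing in Hlt. rewrite exp_ln in Hlt by exact Hx.
  pose proof (exp_ineq1_le (x - 1)). lra.
Qed.

Lemma ln_le_half_sqr_sub1 (x : R) : 0 < x -> ln x <= (x ^ 2 - 1) / 2.
Proof.
  intros Hx.
  pose proof (ln_le_sub1 x Hx).
  pose proof (pow2_ge_0 (x - 1)).
  nra.
Qed.

Lemma Psi_term_div16_eq (a b : R) : 0 < a -> 0 < b ->
  let x := (a + b) / (2 * sqrt (a * b)) in
  (a - b) ^ 2 * (a + b) / (a * b) * / 16 = (a + b) / 2 * ((x ^ 2 - 1) / 2).
Proof.
  intros Ha Hb x. unfold x.
  assert (Hab : 0 < a * b) by nra.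
  assert (Hs : 0 < sqrt (a * b)) by (apply sqrt_lt_R0; exact Hab).
  replace (((a + b) / (2 * sqrt (a * b))) ^ 2)
    with ((a + b) ^ 2 / (4 * (sqrt (a * b) * sqrt (a * b))))
    by (field; lra).
  rewrite sqrt_sqrt by lra.
  field. lra.
Qed.

Lemma T_term_le_Psi_term (a b : R) : 0 < a -> 0 < b ->
  (a + b) / 2 * ln ((a + b) / (2 * sqrt (a * b))) <=
  (a - b) ^ 2 * (a + b) / (a * b) * / 16.
Proof.
  intros Ha Hb.
  rewrite (Psi_term_div16_eq a b Ha Hb).
  assert (Hs : 0 < sqrt (a * b)) by (apply sqrt_lt_R0; nra).
  apply Rmult_le_compat_l; [lra |].
  apply ln_le_half_sqr_sub1.
  apply Rdiv_lt_0_compat; lra.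
Qed.

Theorem proposition3p5 (n : nat) (p q : nat -> R) :
  (2 <= n)%nat -> Gamma n p -> Gamma n q ->
  T_div n p q <= / 16 * Psi_div n p q.
Proof.
  intros Hn [Hp _] [Hq _].
  unfold T_div, Psi_div, sumn.
  rewrite scal_sum.
  apply sum_Rle. intros i Hi.
  apply T_term_le_Psi_term; [apply Hp | apply Hq]; lia.
Qed.
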